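(* Consider the resilient constrained consensus algorithm described in the context, with $\bigcap_{i\in\mathcal H}\mathcal X_i=\{x^*\}$. For $i\in\mathcal H$ and time $t$, define $$e_i(t)=\sum_{j\in\mathcal F_i(t)}(x_i(t)-x_{ji}(t))-\sum_{j\in\mathcal H_i\setminus\mathcal L_i(t)}(x_i(t)-x_{ji}(t))$$ and $$S_i(t)=\tfrac12\sum_{j\in\mathcal H}\|x_i(t)-x_j(t)\|^2+\langle x_i(t)-x^*,e_i(t)\rangle.$$ Then for every $i\in\mathcal H$ and every $t$, $$S_i(t)\ge\tfrac12\sum_{j\in\mathcal L_i(t)}\|x_i(t)-x_j(t)\|^2-2\sum_{j\in\mathcal H_i\setminus\mathcal L_i(t)}\|x_i(t)-x^*\|^2,$$ and $$\sum_{i\in\mathcal H}\phi_i(t)=\sum_{i\in\mathcal H}S_i(t).$$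
   Context: Setting: There are $n$ agents $\mathcal N=\{1,\dots,n\}$ on a complete communication graph. A known integer $f\ge0$ is given. The agents are partitioned into normal agents $\mathcal H$ and Byzantine agents $\mathcal F$ with $|\mathcal F|\le f$. Each $i\in\mathcal H$ has a closed convex $\mathcal X_i\subseteq\mathbb R^m$. Algorithm: normal agent $i$ has state $x_i(t)\in\mathbb R^m$ and at time $t$ receives $x_{ji}(t)$ from each $j\ne i$. If $j\in\mathcal H$, then $x_{ji}(t)=x_j(t)$. If $j\in\mathcal F$, the value is arbitrary and may differ per recipient. Agent $i$ discards the $f$ received vectors with largest $\|x_i(t)-x_{ji}(t)\|$, with ties broken arbitrarily. The remaining $n-f-1$ senders form $\mathcal M_i(t)\subseteq\mathcal N\setminus\{i\}$. The update is $$x_i(t+1)=\mathrm P_{\mathcal X_i}\Big[x_i(t)+\alpha\sum_{j\in\mathcal M_i(t)}(x_{ji}(t)-x_i(t))\Big],$$ with $\alpha>0$ and $\mathrm P_{\mathcal C}$ the Euclidean projection. Notation: - $\mathcal H_i=\mathcal H\setminus\{i\}$; - $\mathcal L_i(t)=\mathcal M_i(t)\cap\mathcal H_i$; - $\mathcal F_i(t)=\mathcal M_i(t)\setminus\mathcal L_i(t)$; - $\phi_i(t)=\big\langle x_i(t)-x^*,\sum_{j\in\mathcal M_i(t)}(x_i(t)-x_{ji}(t))\big\rangle$; - $\langle x,y\rangle=x^\top y$. *)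

From mathcomp Require Import all_boot all_order all_algebra.
From mathcomp Require Import all_classical all_reals all_analysis.
Set Implicit Arguments. Unset Strict Implicit. Unset Printing Implicit Defensive.
Import Order.TTheory GRing.Theory Num.Theory.
Import numFieldTopology.Exports.
Local Open Scope ring_scope.
Local Open Scope classical_set_scope.

Definition dotv {R : realType} {m : nat} (u v : 'rV[R]_m) : R :=
  \sum_(k < m) u ord0 k * v ord0 k.

Definition sqnorm {R : realType} {m : nat} (u : 'rV[R]_m) : R := dotv u u.

Definition is_proj {R : realType} {m : nat} (C : set 'rV[R]_m) (y p : 'rV[R]_m)
  : Prop :=
  C p /\ forall z, C z -> sqnorm (y - p) <= sqnorm (y - z).

(* e_i(t), given the normal set H, the kept set M = M_i(t), agent i,
   its state xi = x_i(t) and the received vectors recv j = x_{ji}(t).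
   L_i = M :&: (H :\ i), F_i = M :\: L_i, H_i \ L_i = (H :\ i) :\: L_i. *)
Definition e_vec {R : realType} {m n : nat} (H M : {set 'I_n}) (i : 'I_n)
  (xi : 'rV[R]_m) (recv : 'I_n -> 'rV[R]_m) : 'rV[R]_m :=
  let L := M :&: (H :\ i) in
  \sum_(j in M :\: L) (xi - recv j) - \sum_(j in (H :\ i) :\: L) (xi - recv j).

Definition S_val {R : realType} {m n : nat} (H M : {set 'I_n}) (i : 'I_n)
  (xs : 'rV[R]_m) (x : 'I_n -> 'rV[R]_m) (recv : 'I_n -> 'rV[R]_m) : R :=
  2^-1 * \sum_(j in H) sqnorm (x i - x j) + dotv (x i - xs) (e_vec H M i (x i) recv).

Definition phi_val {R : realType} {m n : nat} (M : {set 'I_n}) (xi xs : 'rV[R]_m)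
  (recv : 'I_n -> 'rV[R]_m) : R :=
  dotv (xi - xs) (\sum_(j in M) (xi - recv j)).

(* With u = x_i - x*, the kept senders M_i split into the normal ones L_i and
   the Byzantine ones F_i, and H_i splits into L_i and the discarded normal
   ones D_i; hence phi_i = <u, sum_(j in H) (x_i - x_j)> + <u, e_i>, and
   summing <x_i - x*, x_i - x_j> over all pairs i, j in H gives half the sum of
   the squared distances, since the base point x* cancels between (i, j) and
   (j, i).  For the bound, Young's inequality |<u, w>| <= |u|^2 + |w|^2 / 4 is
   applied to every term of e_i; the Byzantine terms are then dominated by the
   discarded normal ones, because |F_i| <= |D_i| (as |M_i| <= |H_i|) and
   trimming only keeps senders closer to x_i than every discarded one. *)

From mathcomp Require Import all_boot all_order all_algebra.
From mathcomp Require Import all_classical all_reals all_analysis.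
From mathcomp Require Import ring lra zify.
Set Implicit Arguments. Unset Strict Implicit. Unset Printing Implicit Defensive.
Import Order.TTheory GRing.Theory Num.Theory.
Import numFieldTopology.Exports.
Local Open Scope ring_scope.
Local Open Scope classical_set_scope.

Lemma big_setID_subset (V : nmodType) (I : finType) (A D : {set I}) (G : I -> V) :
  D \subset A -> \sum_(j in A) G j = \sum_(j in D) G j + \sum_(j in A :\: D) G j.
Proof. by move=> DA; rewrite (big_setID D) (finset.setIidPr DA). Qed.

Lemma ler_sum_card (R : numDomainType) (I : finType) (A B : {set I}) (F G : I -> R) :
  (#|A| <= #|B|)%N -> {in B, forall k, 0 <= G k} ->
  {in A & B, forall j k, F j <= G k} ->
  \sum_(j in A) F j <= \sum_(k in B) G k.
Proof.
move=> AB G_ge0 FG; have SG_ge0 : 0 <= \sum_(k in B) G k by exact: sumr_ge0.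
have [B0 | B_gt0] := posnP #|B|.
  by move: AB; rewrite B0 leqn0 cards_eq0 => /eqP->; rewrite big_set0.
rewrite -(ler_pMn2r B_gt0); apply: (@le_trans _ _ ((\sum_(k in B) G k) *+ #|A|)).
  rewrite -sumrMnl -sumr_const; apply: ler_sum => j jA; rewrite -sumr_const.
  by apply: ler_sum => k kB; exact: FG.
exact: ler_wpMn2l.
Qed.

Section InnerProduct.
Variables (R : realType) (m : nat).
Implicit Types u v w : 'rV[R]_m.

Lemma dotvDr u v w : dotv u (v + w) = dotv u v + dotv u w.
Proof. by rewrite /dotv -big_split; apply: eq_bigr => k _; rewrite !mxE mulrDr. Qed.

Lemma dotvBr u v w : dotv u (v - w) = dotv u v - dotv u w.
Proof. by rewrite /dotv -sumrB; apply: eq_bigr => k _; rewrite !mxE mulrBr. Qed.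

Lemma dotv_sumr (I : finType) (A : {set I}) u (F : I -> 'rV[R]_m) :
  dotv u (\sum_(j in A) F j) = \sum_(j in A) dotv u (F j).
Proof.
rewrite /dotv; under eq_bigr do rewrite summxE mulr_sumr.
by rewrite exchange_big.
Qed.

Lemma sqnorm_ge0 u : 0 <= sqnorm u.
Proof. by apply: sumr_ge0 => k _; rewrite -expr2 sqr_ge0. Qed.

Lemma sqnorm0 : sqnorm (0 : 'rV[R]_m) = 0.
Proof. by apply: big1 => k _; rewrite mxE mul0r. Qed.

Lemma dotv_ge u w : - (sqnorm u + 4^-1 * sqnorm w) <= dotv u w.
Proof.
rewrite /sqnorm /dotv mulr_sumr -big_split -sumrN; apply: ler_sum => k _ /=.
by have := sqr_ge0 (u ord0 k + 2^-1 * w ord0 k); nra.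
Qed.

Lemma dotv_le u w : dotv u w <= sqnorm u + 4^-1 * sqnorm w.
Proof.
rewrite /sqnorm /dotv mulr_sumr -big_split; apply: ler_sum => k _ /=.
by have := sqr_ge0 (u ord0 k - 2^-1 * w ord0 k); nra.
Qed.

Lemma dotv_sub_sym u v w :
  dotv (u - w) (u - v) + dotv (v - w) (v - u) = sqnorm (u - v).
Proof.
by rewrite /sqnorm /dotv -big_split; apply: eq_bigr => k _; rewrite !mxE /=; ring.
Qed.

Lemma sum_dotv_sub_sym (I : finType) (A : {set I}) w (x : I -> 'rV[R]_m) :
  \sum_(i in A) dotv (x i - w) (\sum_(j in A) (x i - x j))
  = \sum_(i in A) 2^-1 * \sum_(j in A) sqnorm (x i - x j).
Proof.
under eq_bigr do rewrite dotv_sumr.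
rewrite -mulr_sumr.
have -> : \sum_(i in A) \sum_(j in A) sqnorm (x i - x j)
   = \sum_(i in A) \sum_(j in A) dotv (x i - w) (x i - x j)
   + \sum_(i in A) \sum_(j in A) dotv (x j - w) (x j - x i).
  rewrite -big_split; apply: eq_bigr => i _; rewrite -big_split.
  by apply: eq_bigr => j _; rewrite -(dotv_sub_sym _ _ w).
rewrite [X in _ = _ * (_ + X)]exchange_big /=.
by move: (\sum_(i in A) _) => T; lra.
Qed.

End InnerProduct.

Section Trimming.
Variables (R : realType) (m n : nat) (H M : {set 'I_n}) (i : 'I_n).
Variables (xs : 'rV[R]_m) (x r : 'I_n -> 'rV[R]_m).
Hypotheses (iH : i \in H) (r_normal : {in H, r =1 x}).
Let L := M :&: (H :\ i).

Lemma sum_normal_split (V : zmodType) (G : 'I_n -> V) : G i = 0 ->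
  \sum_(j in H) G j = \sum_(j in L) G j + \sum_(j in (H :\ i) :\: L) G j.
Proof.
move=> Gi0; rewrite (big_setD1 i iH) /= Gi0 add0r.
exact/big_setID_subset/subsetIr.
Qed.

Lemma sum_kept_split :
  \sum_(j in M) (x i - r j) = \sum_(j in H) (x i - x j) + e_vec H M i (x i) r.
Proof.
rewrite /e_vec -/L (big_setID_subset _ (subsetIl M (H :\ i))) -/L.
rewrite (sum_normal_split (subrr (x i))).
have eqL : \sum_(j in L) (x i - r j) = \sum_(j in L) (x i - x j).
  by apply: eq_bigr => j /setIP[_ /setD1P[_ jH]]; rewrite r_normal.
have eqD : \sum_(j in (H :\ i) :\: L) (x i - r j)
          = \sum_(j in (H :\ i) :\: L) (x i - x j).
  by apply: eq_bigr => j /setDP[/setD1P[_ jH] _]; rewrite r_normal.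
by rewrite eqL eqD addrACA subrr addr0.
Qed.

Lemma phi_val_split : phi_val M (x i) xs r =
  dotv (x i - xs) (\sum_(j in H) (x i - x j)) + dotv (x i - xs) (e_vec H M i (x i) r).
Proof. by rewrite /phi_val sum_kept_split dotvDr. Qed.

Lemma S_val_ge :
  (#|M| <= #|H :\ i|)%N ->
  (forall j k, j \in M -> k \notin M -> k != i ->
     sqnorm (x i - r j) <= sqnorm (x i - r k)) ->
  2^-1 * \sum_(j in L) sqnorm (x i - x j)
    - 2 * \sum_(j in (H :\ i) :\: L) sqnorm (x i - xs) <= S_val H M i xs x r.
Proof.
move=> card_M closer.
set F := M :\: L; set D := (H :\ i) :\: L; set u := x i - xs.
pose bound y := sqnorm u + 4^-1 * sqnorm (x i - y).
have card_FD : (#|F| <= #|D|)%N.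
  rewrite [#|F|]cardsD [#|D|]cardsD.
  by rewrite (finset.setIidPr (subsetIl _ _)) (finset.setIidPr (subsetIr _ _)) leq_sub2r.
have F_le_D : \sum_(j in F) bound (r j) <= \sum_(k in D) bound (x k).
  apply: ler_sum_card card_FD _ _ => [k _ | j k /setDP[jM _] /setDP[/setD1P[ki kH] kL]].
    by rewrite addr_ge0 ?mulr_ge0 ?sqnorm_ge0.
  rewrite lerD2l ler_wpM2l // -(r_normal kH); apply: closer => //.
  by apply: contra kL => kM; rewrite !inE kM ki kH.
have dot_F : - \sum_(j in F) bound (r j) <= \sum_(j in F) dotv u (x i - r j).
  by rewrite -sumrN; apply: ler_sum => j _; exact: dotv_ge.
have dot_D : \sum_(k in D) dotv u (x i - r k) <= \sum_(k in D) bound (x k).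
  by apply: ler_sum => k /setDP[/setD1P[_ kH] _]; rewrite r_normal //; exact: dotv_le.
have bound_D : \sum_(k in D) bound (x k)
    = \sum_(k in D) sqnorm u + 4^-1 * \sum_(k in D) sqnorm (x i - x k).
  by rewrite big_split /= mulr_sumr.
rewrite /S_val /e_vec -/L -/F -/D dotvBr !dotv_sumr.
rewrite (sum_normal_split (_ : sqnorm (x i - x i) = 0)) -/D; last first.
  by rewrite subrr sqnorm0.
lra.
Qed.

End Trimming.

Lemma card_kept_le (n f : nat) (H M : {set 'I_n}) (i : 'I_n) :
  i \in H -> (#|~: H| <= f)%N -> (#|M| + f)%N = (n - 1)%N -> (#|M| <= #|H :\ i|)%N.
Proof.
move=> iH Byz_le card_M; have := cardsCs H; have := cardsD1 i H.
rewrite iH card_ord /=.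
(* The cardinals occur under different but convertible coercion paths, which
   lia would treat as distinct atoms; generalizing them identifies the copies. *)
by move: Byz_le card_M; move: #|~: H| #|H| #|M| #|H :\ i|; lia.
Qed.
Theorem lemma2 (R : realType) (n m f : nat) (H : {set 'I_n})
  (X : 'I_n -> set 'rV[R]_m) (xs : 'rV[R]_m) (alpha : R)
  (x : nat -> 'I_n -> 'rV[R]_m) (msg : nat -> 'I_n -> 'I_n -> 'rV[R]_m)
  (M : nat -> 'I_n -> {set 'I_n}) :
  (#|~: H| <= f)%N ->
  (forall i, i \in H -> closed (X i) /\ convex_set (X i)) ->
  (forall y, (forall i, i \in H -> X i y) <-> y = xs) ->
  0 < alpha ->
  (* messages from normal agents are their true states *)
  (forall t j i, j \in H -> msg t j i = x t j) ->
  (* trimming: M_i(t) is N \ {i} minus f senders of largest distance *)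
  (forall t i, i \in H ->
     i \notin M t i /\ (#|M t i| + f)%N = (n - 1)%N /\
     (forall j k, j \in M t i -> k \notin M t i -> k != i ->
        sqnorm (x t i - msg t j i) <= sqnorm (x t i - msg t k i))) ->
  (* update rule *)
  (forall t i, i \in H ->
     is_proj (X i)
       (x t i + alpha *: \sum_(j in M t i) (msg t j i - x t i))
       (x t.+1 i)) ->
  forall t,
    (forall i, i \in H ->
       S_val H (M t i) i xs (x t) (fun j => msg t j i)
       >= 2^-1 * \sum_(j in M t i :&: (H :\ i)) sqnorm (x t i - x t j)
          - 2 * \sum_(j in (H :\ i) :\: (M t i :&: (H :\ i))) sqnorm (x t i - xs))
    /\
    \sum_(i in H) phi_val (M t i) (x t i) xs (fun j => msg t j i)
    = \sum_(i in H) S_val H (M t i) i xs (x t) (fun j => msg t j i).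
Proof.
move=> Byz_le _ _ _ normal_msg trim _ t; split.
  move=> i iH; have [_ [card_M closer]] := trim t i iH.
  apply: S_val_ge => //; last exact: card_kept_le card_M.
  by move=> j jH; exact: normal_msg.
under eq_bigr => i iH do
  rewrite (phi_val_split (M t i) xs iH (fun j jH => normal_msg t j i jH)).
by rewrite big_split /= sum_dotv_sub_sym /S_val big_split.
Qed.
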